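(* Suppose $\partial\overline{\mathcal{G}}$ is not a set of isolated points, i.e. some point of $\partial\overline{\mathcal{G}}$ is a limit point of $\partial\overline{\mathcal{G}}$. Then there is a continuous function $F:\partial\overline{\mathcal{G}}\to\mathbb{R}$ such that no harmonic function $g$ on $\overline{\mathcal{G}}$ with $g=F$ on $\partial\overline{\mathcal{G}}$ belongs to $\mathbb{H}_1$.
   Context: $\mathcal{G}$ is a connected, locally finite metric graph with countable vertex set and countable edge set. Each edge has a positive length and is identified with an interval. $\mathcal{G}$ carries the geodesic distance $d$, and $\overline{\mathcal{G}}$ is its metric completion. A designated set of vertices, containing all vertices of degree $1$, forms the boundary vertices. $\mathcal{G}_{int}$ is $\mathcal{G}$ minus the boundary vertices, and $\partial\overline{\mathcal{G}}=\overline{\mathcal{G}}\setminus\mathcal{G}_{int}$. Standing assumptions: $\overline{\mathcal{G}}$ is compact and $\partial\overline{\mathcal{G}}$ is totally disconnected. A function $f:\overline{\mathcal{G}}\to\mathbb{R}$ is harmonic if it is continuous, linear on each edge, and satisfies $\sum_{e\sim v}\partial_\nu f_e(v)=0$ at every interior vertex $v$, where $\partial_\nu f_e(v)$ is the derivative of $f_e$ at $v$ in the direction pointing from $v$ into the edge $e$. $\mathbb{H}_1$ is the set of $f:\overline{\mathcal{G}}\to\mathbb{R}$ that are continuous on $\overline{\mathcal{G}}$, absolutely continuous on each edge, and have $f'\in L^2(\mathcal{G})$. *)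

From HB Require Import structures.
From mathcomp Require Import all_boot all_order all_algebra.
From mathcomp Require Import all_classical all_reals all_analysis.
Set Implicit Arguments. Unset Strict Implicit. Unset Printing Implicit Defensive.
Import Order.TTheory GRing.Theory Num.Theory.
Import numFieldNormedType.Exports.
Local Open Scope classical_set_scope.
Local Open Scope ring_scope.

(* Combinatorial data of a metric graph: countable vertex and edge     *)
(* sets, each edge e is identified with the interval [0, len e], with  *)
(* 0 corresponding to src e and len e to tgt e (loops allowed).        *)
Record mgraph (R : realType) := MGraph {
  vert : countType;
  edge : countType;
  src : edge -> vert;
  tgt : edge -> vert;
  len : edge -> R;
  bnd : set vert
}.

Section MetricGraph.
Variables (R : realType) (G : mgraph R).

Definition incident (v : vert G) : set (edge G) :=
  [set e | src e = v \/ tgt e = v].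

Definition degree_one (v : vert G) : Prop :=
  exists e, [/\ incident v e, src e <> tgt e &
                forall e', incident v e' -> e' = e].

(* walks: sequences of oriented edges (true = traversed src -> tgt) *)
Fixpoint walk (u : vert G) (l : seq (edge G * bool)) (v : vert G) : Prop :=
  match l with
  | [::] => u = v
  | (e, b) :: l' => if b then src e = u /\ walk (tgt e) l' v
                    else tgt e = u /\ walk (src e) l' v
  end.

Definition walk_length (l : seq (edge G * bool)) : R := \sum_(x <- l) len x.1.

Definition well_formed_mgraph : Prop :=
  [/\ (forall e : edge G, 0 < len e),
      (forall v, finite_set (incident v)),
      (forall u v, exists l, walk u l v) &
      (forall v, degree_one v -> bnd v)].

(* points of G: vertices, or interior points (e, t) with 0 < t < len e *)
Definition gpt := (vert G + {p : edge G * R | (0 < p.2 < len p.1)})%type.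

Definition epoint (e : edge G) (t : R) : gpt :=
  match @insub _ (fun p : edge G * R => (0 < p.2 < len p.1)) _ (e, t) with
  | Some p => inr p
  | None => if t <= 0 then inl (src e) else inl (tgt e)
  end.

Definition vdist (u v : vert G) : R :=
  inf [set walk_length l | l in [set l | walk u l v]].

(* the endpoints through which a point can be left, with the distance to them *)
Definition exits (p : gpt) : seq (vert G * R) :=
  match p with
  | inl v => [:: (v, 0)]
  | inr q => [:: (src (sval q).1, (sval q).2);
                 (tgt (sval q).1, len (sval q).1 - (sval q).2)]
  end.

Definition same_edge_dist (p q : gpt) : set R :=
  match p, q with
  | inr a, inr b => [set r | (sval a).1 = (sval b).1 /\
                             r = `|(sval a).2 - (sval b).2|]
  | _, _ => set0
  end.

Definition gdist (p q : gpt) : R :=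
  inf ([set r | exists x y, [/\ x \in exits p, y \in exits q &
                                r = x.2 + vdist x.1 y.1 + y.2]]
       `|` same_edge_dist p q).

Definition Gint : set gpt :=
  fun p => match p with inl v => ~ bnd v | inr _ => True end.

End MetricGraph.

(* Metric completion: a complete metric space X (its uniform structure *)
(* is given by the metric dX) with a dense isometric embedding of G.   *)
Definition is_metric_completion (R : realType) (G : mgraph R)
    (X : completePseudoMetricType R) (dX : X -> X -> R) (iota : gpt G -> X) :=
  [/\
      [/\ (forall x y, dX x y = 0 <-> x = y),
          (forall x y, dX x y = dX y x) &
          (forall x y z, dX x z <= dX x y + dX y z)],
      (forall x (r : R), 0 < r -> ball x r = [set y | dX x y < r]),
      (forall p q, dX (iota p) (iota q) = gdist p q) &
      dense (range iota)].

Definition gbdry (R : realType) (G : mgraph R) (X : completePseudoMetricType R)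
    (iota : gpt G -> X) : set X :=
  ~` (iota @` @Gint R G).

Definition mg_harmonic (R : realType) (G : mgraph R) (X : completePseudoMetricType R)
    (iota : gpt G -> X) (f : X -> R) : Prop :=
  [/\ continuous f,
      (forall e : edge G, exists a b : R, forall t, 0 <= t <= len e ->
           f (iota (epoint e t)) = a * t + b) &
      (* Kirchhoff condition at interior vertices: sum of derivatives in the
         directions pointing from v into the incident edges vanishes; for a
         function linear on e the derivative into e at src e is the slope and
         at tgt e it is minus the slope *)
      (forall v : vert G, ~ bnd v ->
         let slope e := (f (iota (inl (tgt e))) - f (iota (inl (src e)))) / len e in
         (\sum_(e \in [set e | src e = v]) slope e)
         - (\sum_(e \in [set e | tgt e = v]) slope e) = 0)].

Definition abs_cont_on (R : realType) (a b : R) (f : R -> R) : Prop :=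
  forall eps : R, 0 < eps -> exists2 delta : R, 0 < delta &
    forall s : seq (R * R),
      sorted <=%R (a :: rcons (flatten [seq [:: x.1; x.2] | x <- s]) b) ->
      \sum_(x <- s) (x.2 - x.1) < delta ->
      \sum_(x <- s) `|f x.2 - f x.1| < eps.

Definition in_H1 (R : realType) (G : mgraph R) (X : completePseudoMetricType R)
    (iota : gpt G -> X) (f : X -> R) : Prop :=
  [/\ continuous f,
      (forall e : edge G, abs_cont_on 0 (len e) (fun t => f (iota (epoint e t)))) &
      (* f' in L^2(G): the a.e.-defined derivatives on the edges are
         represented by measurable h e, and sum_e int_0^{len e} |h e|^2 < oo *)
      exists h : edge G -> R -> R,
        [/\ (forall e, measurable_fun `[0, len e] (h e)),
            (forall e, {ae (@lebesgue_measure R), forall t, `]0, len e[%classic t ->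
                 is_derive t 1 (fun s => f (iota (epoint e s))) (h e t)}) &
            (\esum_(e in [set: edge G])
               (\int[@lebesgue_measure R]_(t in (`[0%R, len e]%classic : set R)) ((h e t) ^+ 2)%:E)
             < +oo)%E]].

From HB Require Import structures.
From mathcomp Require Import all_boot all_order all_algebra.
From mathcomp Require Import all_classical all_reals all_analysis.
From mathcomp Require Import ring lra.
Import Order.TTheory GRing.Theory Num.Theory.
Import numFieldNormedType.Exports.
Set Implicit Arguments. Unset Strict Implicit.
Local Open Scope classical_set_scope.
Local Open Scope ring_scope.

(* A function g in H_1 that is affine on the edges has finite energy
   K = sum_e slope_e^2 len_e, so Cauchy-Schwarz along paths gives the
   1/2-Hoelder bound |g x - g y|^2 <= 3 K d(x, y), first on G and then, by
   density and continuity, on the completion.  The boundary datum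
   F = d(., x0)^(1/4) violates it at boundary points y -> x0, which exist since
   x0 is a limit point of the boundary. *)

Section Walks.
Context {R : realType} {G : mgraph R}.
Implicit Types (u v : vert G) (x : edge G * bool) (l : seq (edge G * bool)).

Definition ostart x : vert G := if x.2 then src x.1 else tgt x.1.
Definition oend x : vert G := if x.2 then tgt x.1 else src x.1.

Lemma walk_cons u x l v : walk u (x :: l) v <-> ostart x = u /\ walk (oend x) l v.
Proof. by case: x => e []. Qed.

Lemma walk_cat u l1 l2 v :
  walk u (l1 ++ l2) v <-> exists w, walk u l1 w /\ walk w l2 v.
Proof.
elim: l1 u => [|x l1 IH] u; first by split=> [|[w [-> //]]]; exists u.
rewrite cat_cons !walk_cons IH; split=> [[xu [w [l1w wv]]]|[w [/walk_cons[xu l1w] wv]]].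
  by exists w; split=> //; apply/walk_cons.
by split=> //; exists w.
Qed.

Lemma ostart_endpoint x b : ostart (x.1, b) = ostart x \/ oend (x.1, b) = ostart x.
Proof. by case: x b => e [] []; [left|right|right|left]. Qed.

Hypothesis len_ge0 : forall e : edge G, 0 <= len e.

Lemma walk_length_ge0 l : 0 <= walk_length l.
Proof. by apply: sumr_ge0 => x _; exact: len_ge0. Qed.

Lemma walk_length_suffix l1 l2 : walk_length l2 <= walk_length (l1 ++ l2).
Proof. by rewrite /walk_length big_cat lerDr walk_length_ge0. Qed.

Lemma walk_edge_uniq u l v : walk u l v ->
  exists l', [/\ walk u l' v, uniq (map fst l') & walk_length l' <= walk_length l].
Proof.
elim: l u => [|x l IH] u; first by exists [::].
move=> /walk_cons [<- /IH [l' [wl' ul' le']]].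
have lex : walk_length l' <= walk_length (x :: l).
  by rewrite /walk_length big_cons -/(walk_length l) ler_wpDl.
case xl': (x.1 \in map fst l'); last first.
  exists (x :: l'); split=> //=; first exact/walk_cons.
    by rewrite xl'.
  by rewrite /walk_length !big_cons lerD2l.
have /mapP [[e b] el' /= xe] := xl'; subst e.
move: wl' ul' lex; case/splitPr: el' => p1 p2 /walk_cat [w [_ ws]].
rewrite map_cat cat_uniq => /and3P [_ _ us] les.
have le_s := le_trans (walk_length_suffix p1 _) les.
have le_p2 := le_trans (walk_length_suffix [:: (x.1, b)] _) le_s.
move: ws => /walk_cons [_ wp2].
case: (ostart_endpoint x b) => [<-|<-].
  by exists ((x.1, b) :: p2); split=> //; apply/walk_cons.
by exists p2; split=> //; case/andP: us.
Qed.
End Walks.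

Lemma is_derive_affine {R : realType} (a c t : R) :
  is_derive t 1 (fun s : R => a * s + c) a.
Proof. by apply: is_derive_eq; rewrite addr0 [LHS]mulr1. Qed.

Lemma ae_neq {R : realType} (a : R) : {ae (@lebesgue_measure R), forall t : R, t != a}.
Proof.
exists [set a]; split; [exact: measurable_set1 | exact: lebesgue_measure_set1 |].
by move=> t /= /negP /negbNE /eqP ->.
Qed.

Section EdgeSlopes.
Context {R : realType} {G : mgraph R} (f : gpt G -> R).
Hypothesis len_gt0 : forall e : edge G, 0 < len e.

Lemma epoint0 (e : edge G) : epoint e 0 = inl (src e).
Proof. by rewrite /epoint insubF ?lexx //= ltxx. Qed.

Lemma epoint_len (e : edge G) : epoint e (len e) = inl (tgt e).
Proof. by rewrite /epoint insubF /= ?ltxx ?andbF // leNgt len_gt0. Qed.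

Lemma epoint_inr (e : edge G) t (et : 0 < t < len e) :
  epoint e t = inr (exist _ (e, t) et).
Proof. by rewrite /epoint insubT. Qed.

Definition edge_slope (e : edge G) : R :=
  (f (inl (tgt e)) - f (inl (src e))) / len e.

Hypothesis f_affine : forall e : edge G, exists a b : R,
  forall t, 0 <= t <= len e -> f (epoint e t) = a * t + b.

Lemma edge_affine (e : edge G) t : 0 <= t <= len e ->
  f (epoint e t) = edge_slope e * t + f (inl (src e)).
Proof.
have [a [b fab]] := f_affine e; have e0 := len_gt0 e.
have f0 : f (inl (src e)) = b by rewrite -epoint0 fab ?mulr0 ?add0r // lexx ltW.
have fL : f (inl (tgt e)) = a * len e + b by rewrite -epoint_len fab // lexx ltW.
by move=> t0e; rewrite fab // /edge_slope fL f0 addrK mulfK // gt_eqF.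
Qed.

Lemma edge_derive_slope (e : edge G) t dt : 0 < t < len e ->
  is_derive t 1 (fun s => f (epoint e s)) dt -> dt = edge_slope e.
Proof.
move=> t0e fdt.
have near_affine : \forall s \near t, f (epoint e s) = edge_slope e * s + f (inl (src e)).
  have : \forall s \near t, s \in `]0, len e[ by apply: near_in_itvoo; rewrite in_itv.
  by apply: filterS => s; rewrite in_itv /= => /andP [? ?]; rewrite edge_affine // !ltW.
have fdt' := near_eq_is_derive near_affine fdt.
rewrite -(@derive_val _ _ _ _ _ _ _ fdt').
exact: (@derive_val _ _ _ _ _ _ _ (is_derive_affine _ _ t)).
Qed.

Definition edge_energy (e : edge G) : R := edge_slope e ^+ 2 * len e.

Lemma edge_energy_ge0 (e : edge G) : 0 <= edge_energy e.
Proof. by rewrite mulr_ge0 ?sqr_ge0 // ltW. Qed.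

Lemma edge_energy_integral (e : edge G) (h : R -> R) :
  measurable_fun `[0, len e] h ->
  {ae (@lebesgue_measure R), forall t, `]0, len e[%classic t ->
     is_derive t 1 (fun s => f (epoint e s)) (h t)} ->
  (\int[@lebesgue_measure R]_(t in (`[0%R, len e]%classic : set R)) (h t ^+ 2)%:E
   = (edge_energy e)%:E)%E.
Proof.
move=> hm hd; rewrite (ae_eq_integral (fun _ => (edge_slope e ^+ 2)%:E)) //.
- rewrite integral_cst // [X in (_ * X)%E]lebesgue_measure_itv /= lte_fin len_gt0.
  by rewrite -EFinD oppr0 addr0 -EFinM.
- exact/measurable_realfun.measurable_EFinP/measurable_realfun.measurable_funX.
have ae_filter := ae_filter_ringOfSetsType (@lebesgue_measure R).
apply: filterS3 hd (ae_neq 0) (ae_neq (len e)) => t hdt t0 te.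
rewrite /= in_itv /= => /andP [t_ge0 t_le].
have t0e : 0 < t < len e by rewrite !lt_neqAle eq_sym t0 te t_ge0 t_le.
by rewrite (edge_derive_slope t0e (hdt _)) //= in_itv.
Qed.
End EdgeSlopes.

Lemma in_H1_energy_finite {R : realType} {G : mgraph R}
    {X : completePseudoMetricType R} (iota : gpt G -> X) (g : X -> R) :
  (forall e : edge G, 0 < len e) ->
  (forall e : edge G, exists a b : R,
     forall t, 0 <= t <= len e -> g (iota (epoint e t)) = a * t + b) ->
  in_H1 iota g ->
  (\esum_(e in [set: edge G]) (edge_energy (g \o iota) e)%:E < +oo)%E.
Proof.
move=> len_gt0 g_affine [_ _ [h [hm hd hfin]]].
by rewrite -(eq_esum (fun e _ => edge_energy_integral len_gt0 g_affine (hm e) (hd e))).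
Qed.

Section Energy.
Context {R : realType} {G : mgraph R} (f : gpt G -> R).
Hypothesis len_gt0 : forall e : edge G, 0 < len e.

Definition energy : R := fine (\esum_(e in [set: edge G]) (edge_energy f e)%:E).

Lemma energy_ge0 : 0 <= energy.
Proof. by apply/fine_ge0/esum_ge0 => e _; rewrite lee_fin edge_energy_ge0. Qed.

Hypothesis energy_finite :
  (\esum_(e in [set: edge G]) (edge_energy f e)%:E < +oo)%E.

Lemma sum_edge_energy_le (l : seq (edge G)) : uniq l ->
  \sum_(e <- l) edge_energy f e <= energy.
Proof.
move=> ul; have fin : (\esum_(e in [set: edge G]) (edge_energy f e)%:E) \is a fin_num.
  by rewrite ge0_fin_numE // esum_ge0 // => e _; rewrite lee_fin edge_energy_ge0.
rewrite -lee_fin /energy fineK // -sumEFin.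
apply: esum_ge; exists [set` l]; first by split; [exact: finite_seq|].
by rewrite -fsbig_seq.
Qed.

Lemma edge_energy_le (e : edge G) : edge_energy f e <= energy.
Proof. by have := @sum_edge_energy_le [:: e] isT; rewrite big_seq1. Qed.
End Energy.

(* The AM-GM form of |f x - f y| <= sqrt (C * d x y), obtained by optimizing
   over t; being affine in d, it passes to infima over paths. *)
Definition sqrt_holder {R : realType} {T : Type} (C : R) (f : T -> R)
    (d : T -> T -> R) : Prop :=
  forall t, 0 < t -> forall x y, 2 * t * `|f x - f y| <= t ^+ 2 * C + d x y.

Lemma amgm_le {R : realFieldType} (t a s : R) : 0 <= s ->
  2 * t * (`|a| * s) <= t ^+ 2 * (a ^+ 2 * s) + s.
Proof.
move=> s0; have : 0 <= s * (t * `|a| - 1) ^+ 2 by rewrite mulr_ge0 ?sqr_ge0.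
rewrite -(real_normK (num_real a)); set y := `|a|.
have -> : s * (t * y - 1) ^+ 2 = t ^+ 2 * (y ^+ 2 * s) + s - 2 * t * (y * s) by ring.
lra.
Qed.

Lemma exits_nonempty {R : realType} {G : mgraph R} (p : gpt G) :
  exists x, x \in exits p.
Proof.
by case: p => [v|q]; [exists (v, 0) | exists (src (sval q).1, (sval q).2)]; rewrite inE eqxx.
Qed.

Section GeodesicBound.
Context {R : realType} {G : mgraph R} (f : gpt G -> R).
Hypothesis len_gt0 : forall e : edge G, 0 < len e.
Hypothesis f_affine : forall e : edge G, exists a b : R,
  forall t, 0 <= t <= len e -> f (epoint e t) = a * t + b.
Hypothesis energy_finite :
  (\esum_(e in [set: edge G]) (edge_energy f e)%:E < +oo)%E.
Hypothesis connected : forall u v : vert G, exists l, walk u l v.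

Section FixedWeight.
Variable t : R.
Hypothesis t_gt0 : 0 < t.

Lemma segment_bound (e : edge G) r : 0 <= r <= len e ->
  2 * t * (`|edge_slope f e| * r) <= t ^+ 2 * energy f + r.
Proof.
case/andP => r0 re; apply: le_trans (amgm_le t _ r0) _; rewrite lerD2r.
apply: ler_wpM2l; first exact: sqr_ge0.
apply: le_trans (edge_energy_le len_gt0 energy_finite e).
by apply: ler_wpM2l; first exact: sqr_ge0.
Qed.

Lemma edge_increment (x : edge G * bool) :
  `|f (inl (ostart x)) - f (inl (oend x))| = `|edge_slope f x.1| * len x.1.
Proof.
have -> : `|edge_slope f x.1| * len x.1 = `|edge_slope f x.1 * len x.1|.
  by rewrite [RHS]normrM (gtr0_norm (len_gt0 x.1)).
by rewrite /edge_slope divfK ?gt_eqF //; case: x => e [] //=; rewrite distrC.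
Qed.

Lemma walk_bound u l v : walk u l v ->
  2 * t * `|f (inl u) - f (inl v)| <=
    t ^+ 2 * \sum_(x <- l) edge_energy f x.1 + walk_length l.
Proof.
elim: l u => [|x l IH] u.
  by move=> ->; rewrite subrr normr0 mulr0 /walk_length !big_nil mulr0 add0r.
move=> /walk_cons [<- /IH wl]; rewrite /walk_length !big_cons -/(walk_length l).
have := amgm_le t (edge_slope f x.1) (ltW (len_gt0 x.1)).
have := ler_distD (f (inl (oend x))) (f (inl (ostart x))) (f (inl v)).
rewrite edge_increment /edge_energy => tri.
have t2 : 0 <= 2 * t by rewrite mulr_ge0 // ltW.
have := ler_wpM2l t2 tri; rewrite mulrDr; lra.
Qed.

Lemma edge_points_bound (e : edge G) r1 r2 :
  0 <= r1 <= len e -> 0 <= r2 <= len e ->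
  2 * t * `|f (epoint e r1) - f (epoint e r2)| <= t ^+ 2 * energy f + `|r1 - r2|.
Proof.
move=> r1e r2e; rewrite !edge_affine // opprD addrACA subrr addr0 -mulrBr normrM.
apply: segment_bound; rewrite normr_ge0 ler_norml.
by case/andP: r1e => *; case/andP: r2e => *; apply/andP; split; lra.
Qed.

Lemma exit_bound (p : gpt G) x : x \in exits p ->
  0 <= x.2 /\ 2 * t * `|f p - f (inl x.1)| <= t ^+ 2 * energy f + x.2.
Proof.
have Ke : 0 <= t ^+ 2 * energy f by rewrite mulr_ge0 ?sqr_ge0 ?energy_ge0.
case: p => [v|[[e s] es]].
  by rewrite inE => /eqP -> /=; rewrite subrr normr0 mulr0 addr0.
rewrite /= !inE -(epoint_inr es); case/andP: es => s0 se /orP [] /eqP -> /=.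
  split; first exact: ltW.
  have := @edge_points_bound e s 0; rewrite epoint0 subr0 (ger0_norm (ltW s0)).
  by apply; rewrite ?lexx ?(ltW s0) ?(ltW se) ?(ltW (len_gt0 e)).
split; first by rewrite subr_ge0 ltW.
have := @edge_points_bound e s (len e).
rewrite (epoint_len len_gt0) (distrC s) (@ger0_norm _ (len e - s)) ?subr_ge0 ?(ltW se) //.
by apply; rewrite ?lexx ?(ltW s0) ?(ltW se) ?(ltW (len_gt0 e)).
Qed.

Lemma vertex_bound u v :
  2 * t * `|f (inl u) - f (inl v)| <= t ^+ 2 * energy f + vdist u v.
Proof.
suff : 2 * t * `|f (inl u) - f (inl v)| - t ^+ 2 * energy f <= vdist u v by lra.
apply: lb_le_inf.
  by have [l uv] := connected u v; exists (walk_length l), l.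
move=> _ [l ul <-].
have [l' [ul' uniql' le']] := walk_edge_uniq (fun e => ltW (len_gt0 e)) ul.
have := sum_edge_energy_le len_gt0 energy_finite uniql'; rewrite big_map => le_sum.
have := walk_bound ul'.
have : t ^+ 2 * \sum_(x <- l') edge_energy f x.1 <= t ^+ 2 * energy f.
  by apply: ler_wpM2l; [exact: sqr_ge0 | exact: le_sum].
lra.
Qed.

Lemma same_edge_bound (p q : gpt G) r : same_edge_dist p q r ->
  2 * t * `|f p - f q| <= t ^+ 2 * energy f + r.
Proof.
case: p => [v|[[e s1] es1]]; case: q => [w|[[e' s2] es2]] //= [/= ee' ->]; subst e'.
rewrite -(epoint_inr es1) -(epoint_inr es2).
by case/andP: es1 => /= *; case/andP: es2 => /= *; apply: edge_points_bound; rewrite !ltW.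
Qed.

Lemma gdist_bound (p q : gpt G) :
  2 * t * `|f p - f q| <= t ^+ 2 * (3 * energy f) + gdist p q.
Proof.
suff : 2 * t * `|f p - f q| - t ^+ 2 * (3 * energy f) <= gdist p q by lra.
apply: lb_le_inf.
  have [x xp] := exits_nonempty p; have [y yq] := exits_nonempty q.
  by exists (x.2 + vdist x.1 y.1 + y.2); left; exists x, y.
have Ke : 0 <= t ^+ 2 * energy f by rewrite mulr_ge0 ?sqr_ge0 ?energy_ge0.
move=> r [[x [y [xp yq ->]]] | pq]; last by have := same_edge_bound pq; lra.
have [_ px] := exit_bound xp; have [_ qy] := exit_bound yq.
have xy := vertex_bound x.1 y.1.
have tri : `|f p - f q| <=
    `|f p - f (inl x.1)| + `|f (inl x.1) - f (inl y.1)| + `|f q - f (inl y.1)|.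
  rewrite (distrC (f q)); apply: le_trans (ler_distD (f (inl x.1)) _ _) _.
  by rewrite -addrA lerD2l ler_distD.
have t2 : 0 <= 2 * t by rewrite mulr_ge0 // ltW.
have := ler_wpM2l t2 tri; rewrite !mulrDr; lra.
Qed.
End FixedWeight.

Lemma gdist_sqrt_holder : sqrt_holder (3 * energy f) f (@gdist R G).
Proof. by move=> t t_gt0 p q; rewrite gdist_bound. Qed.
End GeodesicBound.

Section CompletionMetric.
Context {R : realType} {X : pseudoMetricType R} (dX : X -> X -> R).
Hypothesis dX0 : forall x y, dX x y = 0 <-> x = y.
Hypothesis dX_sym : forall x y, dX x y = dX y x.
Hypothesis dX_triangle : forall x y z, dX x z <= dX x y + dX y z.
Hypothesis ball_dX : forall x (r : R), 0 < r -> ball x r = [set y | dX x y < r].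

Lemma dX_gt0 x y : x != y -> 0 < dX x y.
Proof.
move=> xy; rewrite lt_neqAle eq_sym; apply/andP; split.
  by apply: contra xy => /eqP /dX0 ->.
have := dX_triangle x y x; rewrite (dX_sym y x) (proj2 (dX0 x x) erefl); lra.
Qed.

Lemma continuous_dX x0 : continuous (dX ^~ x0).
Proof.
move=> x; apply/cvgrPdist_lt => eps eps0; apply/nbhs_ballP; exists eps => // z.
rewrite ball_dX //= => xz; have := dX_triangle x z x0; have := dX_triangle z x x0.
by rewrite (dX_sym z x) ltr_norml => *; apply/andP; split; lra.
Qed.

Variables (T : Type) (iota : T -> X) (g : X -> R).
Hypothesis dense_iota : dense (range iota).
Hypothesis g_cont : continuous g.

Lemma dense_approx x eta : 0 < eta ->
  exists p, dX x (iota p) < eta /\ `|g x - g (iota p)| < eta.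
Proof.
move=> eta0; have /cvgrPdist_lt/(_ eta eta0)/nbhs_ballP [del del0 gdel] := @g_cont x.
have m0 : 0 < Order.min del eta by rewrite lt_min del0 eta0.
have [z [/interior_subset xz [p _ pz]]] : (ball x (Order.min del eta))° `&` range iota !=set0.
  by apply: dense_iota; [exists x; exact: nbhsx_ballx | exact: open_interior].
move: xz; rewrite -pz ball_dX //= lt_min => /andP [pdel peta].
by exists p; split => //; apply: gdel; rewrite ball_dX.
Qed.

Lemma sqrt_holder_dense C :
  sqrt_holder C (g \o iota) (fun p q => dX (iota p) (iota q)) -> sqrt_holder C g dX.
Proof.
move=> hold t t0 x y; apply/ler_addgt0Pr => eps eps0.
have k0 : 0 < 4 * t + 2 by lra.
set eta := eps / (4 * t + 2).
have eta0 : 0 < eta by rewrite divr_gt0.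
have eps_eta : eta * (4 * t + 2) = eps by rewrite /eta divfK // gt_eqF.
have [p [dp gp]] := dense_approx x eta0; have [q [dq gq]] := dense_approx y eta0.
have := hold t t0 p q => /= hpq.
have dpq : dX (iota p) (iota q) <= dX x y + 2 * eta.
  have := dX_triangle (iota p) x (iota q); have := dX_triangle x y (iota q).
  rewrite (dX_sym (iota p) x); lra.
have tri : `|g x - g y| <=
    `|g x - g (iota p)| + `|g (iota p) - g (iota q)| + `|g y - g (iota q)|.
  apply: le_trans (ler_distD (g (iota p)) _ _) _; rewrite -addrA lerD2l.
  by apply: le_trans (ler_distD (g (iota q)) _ _) _; rewrite (distrC (g y)).
have t2 : 0 <= 2 * t by lra.
have := ler_wpM2l t2 tri; rewrite !mulrDr.
have := ler_wpM2l t2 (ltW gp); have := ler_wpM2l t2 (ltW gq).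
have : 2 * t * eta * 2 + 2 * eta = eps by rewrite -eps_eta; ring.
lra.
Qed.
End CompletionMetric.

Lemma sqrt_holder_root4_gap {R : realType} {T : Type} (C : R) (g : T -> R)
    (d : T -> T -> R) x y :
  0 <= C -> sqrt_holder C g d -> 0 < d y x ->
  g y - g x = Num.sqrt (Num.sqrt (d y x)) -> (2 / (C + 1)) ^+ 4 <= d y x.
Proof.
move=> C0 hold dyx gyx; set q := Num.sqrt (Num.sqrt (d y x)) in gyx.
have q0 : 0 < q by rewrite !sqrtr_gt0.
have dq : d y x = q ^+ 4.
  by rewrite (exprM q 2 2) !sqr_sqrtr // ?sqrtr_ge0 // ltW.
have := hold (q ^+ 2) (exprn_gt0 2 q0) y x; rewrite gyx (gtr0_norm q0) dq.
have -> : 2 * q ^+ 2 * q = q ^+ 3 * 2 by ring.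
have -> : (q ^+ 2) ^+ 2 * C + q ^+ 4 = q ^+ 3 * (q * (C + 1)) by ring.
rewrite ler_pM2l ?exprn_gt0 // => q2.
have C1 : 0 < C + 1 by lra.
by rewrite ler_pXn2r // ?nnegrE ?(ltW q0) ?divr_ge0 ?(ltW C1) // ler_pdivrMr.
Qed.

Unset Implicit Arguments.

Theorem proposition3p7 (R : realType) (G : mgraph R)
    (X : completePseudoMetricType R) (dX : X -> X -> R) (iota : gpt G -> X) :
  well_formed_mgraph G ->
  is_metric_completion dX iota ->
  compact [set: X] ->
  totally_disconnected (gbdry iota) ->
  (exists x, gbdry iota x /\ limit_point (gbdry iota) x) ->
  exists F : X -> R,
    {within gbdry iota, continuous F} /\
    forall g : X -> R, mg_harmonic iota g ->
      (forall x, gbdry iota x -> g x = F x) -> ~ in_H1 iota g.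
Proof.
move=> [len_gt0 _ connected _] [[dX0 dX_sym dX_tri] ball_dX iso dense_iota] _ _.
move=> [x0 [bx0 lim_x0]].
exists (fun x => Num.sqrt (Num.sqrt (dX x x0))); split.
  apply: continuous_subspaceT => x; apply: continuous_comp; last exact: sqrt_continuous.
  by apply: continuous_comp; [exact: continuous_dX | exact: sqrt_continuous].
move=> g [g_cont g_affine _] gF /(in_H1_energy_finite len_gt0 g_affine) energy_finite.
set K := 3 * energy (g \o iota).
have K0 : 0 <= K by rewrite mulr_ge0 ?energy_ge0.
have hold : sqrt_holder K g dX.
  apply: (sqrt_holder_dense dX_sym dX_tri ball_dX dense_iota g_cont) => t t0 p q.
  by rewrite iso; exact: (gdist_sqrt_holder len_gt0 g_affine energy_finite connected).
have r0 : 0 < (2 / (K + 1)) ^+ 4 by rewrite exprn_gt0 // divr_gt0 //; lra.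
have [y [yx0 y_bd x0y]] := lim_x0 _ (nbhsx_ballx x0 _ r0).
move: x0y; rewrite ball_dX //= dX_sym; apply/negP; rewrite -leNgt.
apply: (sqrt_holder_root4_gap K0 hold (dX_gt0 dX0 dX_sym dX_tri yx0)).
by rewrite !gF // (proj2 (dX0 x0 x0) erefl) !sqrtr0 subr0.
Qed.
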